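(* Let $\mathbb{X}$ be a two-dimensional real Banach space, let $x\in S_{\mathbb{X}}$ be a smooth point, and let $\epsilon\in[0,1)$. Then there exists a normal cone $K$ in $\mathbb{X}$ such that $G(x,\epsilon)=K\cup(-K)$.
   Context: $S_{\mathbb{X}}$ is the unit sphere. A point $x\in S_{\mathbb{X}}$ is smooth if there is a unique norm-one linear functional $f$ with $f(x)=1$. For $x,y\in\mathbb{X}$ and $\epsilon\in[0,1)$, $x\perp_B^{\epsilon} y$ means $\|x+\lambda y\|^2\geq\|x\|^2-2\epsilon\|x\|\,\|\lambda y\|$ for all $\lambda\in\mathbb{R}$; $G(x,\epsilon)=\{y\in\mathbb{X}: x\perp_B^{\epsilon}y\}$. A subset $K\subseteq\mathbb{X}$ is a normal cone if $K+K\subseteq K$, $\alpha K\subseteq K$ for all $\alpha\geq0$, and $K\cap(-K)=\{0\}$. *)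

From HB Require Import structures.
From mathcomp Require Import all_boot all_order all_algebra.
From mathcomp Require Import all_classical all_reals all_analysis.
Set Implicit Arguments. Unset Strict Implicit. Unset Printing Implicit Defensive.
Import Order.TTheory GRing.Theory Num.Theory.
Import numFieldNormedType.Exports.
Local Open Scope classical_set_scope.
Local Open Scope ring_scope.

Section Defs.
Variables (R : realType) (V : normedModType R).

Definition dim2 : Prop :=
  exists e1 e2 : V,
    (forall s t : R, s *: e1 + t *: e2 = 0 -> s = 0 /\ t = 0) /\
    (forall v : V, exists s t : R, v = s *: e1 + t *: e2).

Definition lin_functional (f : V -> R) : Prop :=
  forall (a : R) (u v : V), f (a *: u + v) = a * f u + f v.

Definition norm_one_functional (f : V -> R) : Prop :=
  (forall v : V, `|f v| <= `|v|) /\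
  (forall e : R, 0 < e -> exists v : V, `|v| = 1 /\ 1 - e < `|f v|).

Definition smooth_point (x : V) : Prop :=
  `|x| = 1 /\
  exists f : V -> R,
    [/\ lin_functional f, norm_one_functional f, f x = 1 &
       forall g : V -> R, lin_functional g -> norm_one_functional g ->
         g x = 1 -> g = f].

Definition bj_orth (eps : R) (x y : V) : Prop :=
  forall lam : R,
    `|x + lam *: y| ^+ 2 >= `|x| ^+ 2 - 2 * eps * `|x| * `|lam *: y|.

Definition G (x : V) (eps : R) : set V := [set y | bj_orth eps x y].

Definition normal_cone (K : set V) : Prop :=
  [/\ (forall u v, K u -> K v -> K (u + v)),
      (forall (a : R) v, 0 <= a -> K v -> K (a *: v)) &
      K `&` [set - v | v in K] = [set 0]].

End Defs.

(* Let f be the functional supporting the smooth point x, and split the plane as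
   v = f v x + h v z with ker f = span z.  Smoothness makes ker f tangent to the
   unit sphere at x: if the norm grew at a positive rate d along z, the tilted
   functional f + d h would be a second norm-one functional supporting x.
   Tangency yields x _|_B^eps y <-> |f y| <= eps |y|.  As eps < 1, this set meets
   the line ker h only at 0, and its part in the half-plane h >= 0 is closed
   under addition (a slope comparison), so it is K u -K with K a normal cone. *)

From HB Require Import structures.
From mathcomp Require Import all_boot all_order all_algebra.
From mathcomp Require Import all_classical all_reals all_analysis.
From mathcomp Require Import lra ring.
Import Order.TTheory GRing.Theory Num.Theory.
Import numFieldNormedType.Exports.
Local Open Scope classical_set_scope.
Local Open Scope ring_scope.

Set Implicit Arguments.
Unset Strict Implicit.

Section LinearFunctional.
Variables (R : realType) (V : normedModType R) (f : V -> R).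
Hypothesis lf : lin_functional f.

Lemma lin_functional0 : f 0 = 0.
Proof. by have := lf 1 0 0; rewrite scale1r addr0 mul1r; lra. Qed.

Lemma lin_functionalD u v : f (u + v) = f u + f v.
Proof. by rewrite -[u in LHS]scale1r lf mul1r. Qed.

Lemma lin_functionalZ a v : f (a *: v) = a * f v.
Proof. by rewrite -[_ *: v]addr0 lf lin_functional0 addr0. Qed.

Lemma lin_functionalN v : f (- v) = - f v.
Proof. by rewrite -scaleN1r lin_functionalZ mulN1r. Qed.

Lemma lin_functionalB u v : f (u - v) = f u - f v.
Proof. by rewrite lin_functionalD lin_functionalN. Qed.

End LinearFunctional.

Lemma lin_functional_opp (R : realType) (V : normedModType R) (f : V -> R) :
  lin_functional f -> lin_functional (fun v => - f v).
Proof. by move=> lf a u v; rewrite lf mulrN opprD. Qed.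

Lemma lin_functional_addZ (R : realType) (V : normedModType R) (f h : V -> R) d :
  lin_functional f -> lin_functional h -> lin_functional (fun v => f v + d * h v).
Proof. by move=> lf lh a u v; rewrite lf lh; ring. Qed.

Section TwoDimensional.
Variables (R : realType) (V : normedModType R).

Lemma scalerIl (z : V) (a b : R) : z != 0 -> a *: z = b *: z -> a = b.
Proof.
move=> z0 /eqP; rewrite -subr_eq0 -scalerBl scaler_eq0 (negbTE z0) orbF subr_eq0.
by move/eqP.
Qed.

Lemma scale_comb2 (u w : V) c1 a1 b1 c2 a2 b2 :
  c1 *: (a1 *: u + b1 *: w) + c2 *: (a2 *: u + b2 *: w) =
  (c1 * a1 + c2 * a2) *: u + (c1 * b1 + c2 * b2) *: w.
Proof. by rewrite !scalerDr !scalerA addrACA -!scalerDl. Qed.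

Hypothesis hdim : dim2 V.

Lemma dim2_indep_span (x z : V) :
  (forall a b : R, a *: x + b *: z = 0 -> a = 0 /\ b = 0) ->
  forall v, exists a b : R, v = a *: x + b *: z.
Proof.
move=> indep v.
have [e1 [e2 [_ span]]] := hdim.
have [p [q ex]] := span x; have [r [s ez]] := span z; have [al [be ev]] := span v.
pose D := p * s - q * r.
(* Cramer's rule *)
have De1 : s *: x + (- q) *: z = D *: e1 + 0 *: e2.
  by rewrite ex ez scale_comb2; congr (_ *: _ + _ *: _); rewrite /D; ring.
have De2 : (- r) *: x + p *: z = 0 *: e1 + D *: e2.
  by rewrite ex ez scale_comb2; congr (_ *: _ + _ *: _); rewrite /D; ring.
have [D0|D0] := eqVneq D 0.
  rewrite D0 !scale0r addr0 in De1 De2.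
  have [s0 q0] := indep _ _ De1; have [r0 p0] := indep _ _ De2.
  have x0 : x = 0 by rewrite ex p0 -[q]opprK q0 oppr0 !scale0r addr0.
  have := indep 1 0; rewrite x0 scaler0 scale0r addr0 => /(_ erefl) [/eqP].
  by rewrite oner_eq0.
exists ((al * s - be * r) / D), ((be * p - al * q) / D).
apply: (scalerI D0).
have -> : D *: v = al *: (s *: x + (- q) *: z) + be *: ((- r) *: x + p *: z).
  by rewrite De1 De2 scale_comb2 ev scalerDr !scalerA; congr (_ *: _ + _ *: _); ring.
by rewrite scale_comb2 scalerDr !scalerA; congr (_ *: _ + _ *: _); field.
Qed.

Variables (f : V -> R) (x : V).
Hypotheses (lf : lin_functional f) (fx : f x = 1).

Lemma dim2_ker_neq0 : exists z, f z = 0 /\ z != 0.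
Proof.
have [e1 [e2 [indep span]]] := hdim.
exists (f e2 *: e1 + (- f e1) *: e2); split.
  by rewrite (lin_functionalD lf) !(lin_functionalZ lf); ring.
apply/negP => /eqP /indep [fe2 /eqP]; rewrite oppr_eq0 => /eqP fe1.
have [a [b ex]] := span x.
move: fx; rewrite ex (lin_functionalD lf) !(lin_functionalZ lf) fe1 fe2 !mulr0 addr0.
by move/eqP; rewrite eq_sym oner_eq0.
Qed.

Variable z : V.
Hypotheses (fz : f z = 0) (z0 : z != 0).

Lemma ker_indep (a b : R) : a *: x + b *: z = 0 -> a = 0 /\ b = 0.
Proof.
move=> abxz; have a0 : a = 0.
  have := congr1 f abxz.
  by rewrite (lin_functionalD lf) !(lin_functionalZ lf) fx fz (lin_functional0 lf); lra.
split=> //; apply: (scalerIl z0).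
by move: abxz; rewrite a0 scale0r add0r scale0r.
Qed.

Lemma coord_functional : exists h : V -> R,
  [/\ lin_functional h, h x = 0, h z = 1 & forall v, v = f v *: x + h v *: z].
Proof.
have coord v : exists b, v = f v *: x + b *: z.
  have [a [b ev]] := dim2_indep_span ker_indep v.
  exists b; suff -> : f v = a by [].
  by rewrite ev (lin_functionalD lf) !(lin_functionalZ lf) fx fz mulr1 mulr0 addr0.
have [h hv] := boolp.choice coord.
exists h; split=> //.
- move=> a u v; apply: (scalerIl z0); apply: (addrI (f (a *: u + v) *: x)).
  rewrite -hv lf [u in LHS]hv [v in LHS]hv.
  by rewrite scalerDr !scalerA addrACA -!scalerDl.
- apply: (scalerIl z0); apply: (addrI x).
  by rewrite scale0r addr0 [RHS]hv fx scale1r.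
- by apply: (scalerIl z0); rewrite scale1r [RHS]hv fz scale0r add0r.
Qed.

End TwoDimensional.

Lemma bj_orthN (R : realType) (V : normedModType R) eps (x y : V) :
  bj_orth eps x y -> bj_orth eps x (- y).
Proof. by move=> bj lam; rewrite scalerN -scaleNr; exact: bj. Qed.

Lemma norm_ray_shrink (R : realType) (V : normedModType R) (x z : V) d s s0 :
  `|x| <= 1 -> 0 < s -> s <= s0 ->
  `|x + s0 *: z| <= 1 + d * s0 -> `|x + s *: z| <= 1 + d * s.
Proof.
move=> x_le1 s_gt0 s_le bound0.
have s0_gt0 : 0 < s0 by apply: lt_le_trans s_le.
pose t := s / s0.
have t_gt0 : 0 < t by rewrite divr_gt0.
have t_le1 : t <= 1 by rewrite ler_pdivrMr // mul1r.
have ts0 : t * s0 = s by rewrite divfK ?gt_eqF.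
clearbody t.
have -> : x + s *: z = (1 - t) *: x + t *: (x + s0 *: z).
  by rewrite scalerDr scalerA ts0 addrA -scalerDl subrK scale1r.
apply: (le_trans (ler_normD _ _)); rewrite !normrZ ger0_norm ?subr_ge0 // gtr0_norm //.
have : t * `|x + s0 *: z| <= t * (1 + d * s0) by rewrite ler_wpM2l // ltW.
have : (1 - t) * `|x| <= 1 - t by rewrite ler_piMr ?subr_ge0.
by rewrite -ts0; nra.
Qed.

Section SmoothPoint.
Variables (R : realType) (V : normedModType R) (f : V -> R) (x : V).
Hypotheses (lf : lin_functional f) (f_le : forall v, `|f v| <= `|v|).
Hypotheses (fx : f x = 1) (nx : `|x| = 1).

Lemma bj_orth_of_le eps y : 0 <= eps -> `|f y| <= eps * `|y| -> bj_orth eps x y.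
Proof.
move=> eps_ge0 fy_le lam; rewrite /Order.ge /= nx expr1n mulr1 normrZ.
have f_lower : 1 + lam * f y <= `|x + lam *: y|.
  have := f_le (x + lam *: y).
  by rewrite (lin_functionalD lf) (lin_functionalZ lf) fx ler_norml => /andP[].
have : `|lam * f y| <= `|lam| * (eps * `|y|) by rewrite normrM ler_wpM2l.
rewrite ler_norml => /andP[lam_fy _].
have -> : 2 * eps * (`|lam| * `|y|) = 2 * (`|lam| * (eps * `|y|)) by ring.
move: (`|lam| * _) lam_fy => q lam_fy.
have N_ge0 : 0 <= `|x + lam *: y| by [].
have [q_le1|q_gt1] := leP q 1; nra.
Qed.

Section Tilt.
Variables (h : V -> R) (z : V).
Hypotheses (lh : lin_functional h) (hx : h x = 0).
Hypothesis decomp : forall v, v = f v *: x + h v *: z.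

Lemma tilt_norm_one d : 0 < d ->
  (forall s, 0 < s -> 1 + d * s < `|x + s *: z|) ->
  norm_one_functional (fun v => f v + d * h v).
Proof.
move=> d_gt0 steep.
have tilt_le v : f v + d * h v <= `|v|.
  have := f_le v; rewrite ler_norml => /andP[_ fv_le].
  have [hv_le0|hv_gt0] := leP (h v) 0; first nra.
  have [fv_gt0|fv_le0] := ltP 0 (f v).
    have ev : v = f v *: (x + (h v / f v) *: z).
      by rewrite scalerDr scalerA mulrCA divff ?gt_eqF // mulr1 -decomp.
    rewrite [v in `|v|]ev normrZ gtr0_norm //.
    have := steep _ (divr_gt0 hv_gt0 fv_gt0).
    have : f v * (1 + d * (h v / f v)) = f v + d * h v by field; rewrite gt_eqF.
    nra.
  have ev : v = h v *: (x + z) - (h v - f v) *: x.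
    by rewrite scalerDr scalerBl opprB [RHS]addrC addrA subrK -decomp.
  have := lerB_dist (h v *: (x + z)) ((h v - f v) *: x).
  rewrite -ev !normrZ nx gtr0_norm // ger0_norm ?subr_ge0; last lra.
  have := steep 1 ltr01; rewrite scale1r.
  nra.
split.
  move=> v; rewrite ler_norml tilt_le andbT.
  have := tilt_le (- v).
  by rewrite (lin_functionalN lf) (lin_functionalN lh) normrN; lra.
move=> e e_gt0; exists x; split=> //.
by rewrite fx hx mulr0 addr0 normr1; lra.
Qed.

End Tilt.

Hypothesis hdim : dim2 V.
Hypothesis f_unique : forall g : V -> R, lin_functional g ->
  norm_one_functional g -> g x = 1 -> g = f.

Lemma smooth_ker_tangent z d : f z = 0 -> 0 < d ->
  exists s0, 0 < s0 /\ forall s, 0 < s -> s <= s0 -> `|x + s *: z| <= 1 + d * s.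
Proof.
move=> fz d_gt0; have [->|z0] := eqVneq z 0.
  exists 1; split=> // s s_gt0 _; rewrite scaler0 addr0 nx.
  by rewrite lerDl mulr_ge0 // ltW.
have [[s0 [s0_gt0 bound0]]|flat] :=
  pselect (exists s0, 0 < s0 /\ `|x + s0 *: z| <= 1 + d * s0).
  by exists s0; split=> // s s_gt0 s_le; apply: norm_ray_shrink bound0; rewrite ?nx.
have steep s : 0 < s -> 1 + d * s < `|x + s *: z|.
  by move=> s_gt0; rewrite ltNge; apply/negP => bound; apply: flat; exists s.
have [h [lh hx hz decomp]] := coord_functional hdim lf fx fz z0.
have := f_unique (lin_functional_addZ d lf lh) (tilt_norm_one lh hx decomp d_gt0 steep).
rewrite fx hx mulr0 addr0 => /(_ erefl) /(congr1 (fun g => g z)).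
by rewrite fz hz; lra.
Qed.

Lemma smooth_norm_descent y d e : 0 <= f y -> 0 < d -> 0 < e ->
  exists t, [/\ 0 < t, t <= e & `|x - t *: y| <= 1 - t * (f y - d)].
Proof.
move=> fy_ge0 d_gt0 e_gt0; set a := f y.
have fz : f (a *: x - y) = 0.
  by rewrite (lin_functionalB lf) (lin_functionalZ lf) fx mulr1 subrr.
have [s0 [s0_gt0 tangent]] := smooth_ker_tangent fz d_gt0.
pose s := Order.min s0 e.
have s_gt0 : 0 < s by rewrite lt_min s0_gt0.
have s_le0 : s <= s0 by rewrite ge_min lexx.
have s_le : s <= e by rewrite ge_min lexx orbT.
clearbody s.
have as_gt0 : 0 < 1 + a * s by rewrite ltr_pwDl // mulr_ge0 // ltW.
pose c := (1 + a * s)^-1.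
have c_gt0 : 0 < c by rewrite invr_gt0.
have ray : x - (s * c) *: y = c *: (x + s *: (a *: x - y)).
  rewrite scalerBr scalerA addrA -{2}[x]scale1r -scalerDl (mulrC s a).
  by rewrite scalerBr !scalerA mulVf ?gt_eqF // scale1r mulrC.
exists (s * c); split.
- by rewrite mulr_gt0.
- rewrite (le_trans _ s_le) // ler_pdivrMr // ler_peMr ?(ltW s_gt0) //.
  by rewrite lerDl mulr_ge0 // ltW.
- rewrite ray normrZ gtr0_norm //.
  apply: (le_trans (ler_wpM2l (ltW c_gt0) (tangent s s_gt0 s_le0))).
  by rewrite le_eqVlt; apply/orP; left; apply/eqP; rewrite /c; field; rewrite gt_eqF.
Qed.

Lemma bj_orth_le eps y : 0 <= eps -> bj_orth eps x y -> f y <= eps * `|y|.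
Proof.
(* otherwise the norm would decrease along -y faster than bj_orth permits *)
move=> eps_ge0 bj; rewrite leNgt; apply/negP => fy_gt.
have b_ge0 : 0 <= eps * `|y| by rewrite mulr_ge0.
move: fy_gt b_ge0; set a := f y; set b := eps * `|y| => fy_gt b_ge0.
pose d := (a - b) / 2; pose k := a - d.
have d_gt0 : 0 < d by rewrite /d; lra.
have k_gt0 : 0 < k by rewrite /k /d; lra.
have [t [t_gt0 t_le descent]] := smooth_norm_descent (ltW (le_lt_trans b_ge0 fy_gt))
  d_gt0 (divr_gt0 d_gt0 (exprn_gt0 2 k_gt0)).
have tk2_le : t * k ^+ 2 <= d by rewrite -ler_pdivlMr // exprn_gt0.
have := bj (- t); rewrite nx expr1n mulr1 normrZ normrN gtr0_norm // scaleNr.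
have -> : 2 * eps * (t * `|y|) = 2 * t * b by rewrite /b; ring.
move: descent; rewrite -/a -/k.
move: `|x - t *: y| (normr_ge0 (x - t *: y)) => N N_ge0 N_le.
have : N ^+ 2 <= (1 - t * k) ^+ 2 by rewrite ler_pXn2r ?nnegrE //; lra.
have kb : k - b = d by rewrite /k /d; lra.
rewrite /Order.ge /=; move: d_gt0 tk2_le kb; clearbody d k.
nra.
Qed.

Lemma G_smooth eps : 0 <= eps -> G x eps = [set y | `|f y| <= eps * `|y|].
Proof.
move=> eps_ge0; apply/seteqP; split=> y /=; last exact: bj_orth_of_le.
move=> bj; rewrite ler_norml (bj_orth_le eps_ge0 bj) andbT.
have := bj_orth_le eps_ge0 (bj_orthN bj).
by rewrite (lin_functionalN lf) normrN; lra.
Qed.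

End SmoothPoint.

Definition eps_cone (R : realType) (V : normedModType R) (f h : V -> R) (eps : R) :
  set V := [set u | `|f u| <= eps * `|u| /\ 0 <= h u].

Section EpsCone.
Variables (R : realType) (V : normedModType R) (f h : V -> R) (x z : V) (eps : R).
Hypotheses (lf : lin_functional f) (lh : lin_functional h).
Hypotheses (decomp : forall v, v = f v *: x + h v *: z) (nx : `|x| = 1).
Hypotheses (eps_ge0 : 0 <= eps) (eps_lt1 : eps < 1).

Lemma eps_small_ker0 u : `|f u| <= eps * `|u| -> h u = 0 -> u = 0.
Proof.
move=> fu_le hu0.
have eu : u = f u *: x by rewrite [LHS]decomp hu0 scale0r addr0.
have fu0 : f u = 0.
  apply/normr0_eq0/eqP; rewrite eq_le normr_ge0 andbT.
  move: fu_le; rewrite [in `|u|]eu normrZ nx mulr1.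
  by have := normr_ge0 (f u); move: eps_lt1; nra.
by rewrite eu fu0 scale0r.
Qed.

(* Rescale [u] to [w] with [h w = h (u + v)]: then [u + v = w - dd *: x] with [dd >= 0]. *)
Lemma eps_small_addr_slope u v : `|f u| <= eps * `|u| -> 0 < h u -> 0 <= h v ->
  f (u + v) * h u <= f u * h (u + v) -> f (u + v) <= eps * `|u + v|.
Proof.
move=> fu_le hu_gt0 hv_ge0 slope.
have hS : h (u + v) = h u + h v by rewrite (lin_functionalD lh).
move: slope hS; set S := u + v => slope hS.
pose r := h S / h u.
have r_ge0 : 0 <= r by rewrite divr_ge0 //; lra.
have rhu : r * h u = h S by rewrite divfK ?gt_eqF.
clearbody r; set w := r *: u.
have fw_le : `|f w| <= eps * `|w|.
  by rewrite (lin_functionalZ lf) normrM normrZ ger0_norm // mulrCA ler_wpM2l.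
have fS_le : f S <= f w.
  by rewrite (lin_functionalZ lf) -(ler_pM2r hu_gt0) -mulrA mulrCA rhu.
pose dd := f w - f S.
have eS : S = w - dd *: x.
  rewrite [LHS]decomp [w in RHS]decomp (lin_functionalZ lh) rhu.
  by rewrite addrAC -scalerBl /dd opprB addrCA subrr addr0.
clearbody w; have := lerB_dist w (dd *: x).
rewrite -eS normrZ nx ger0_norm ?subr_ge0 // mulr1.
move: fw_le; rewrite ler_norml => /andP[_ fw_le].
have : 0 <= dd by rewrite subr_ge0.
rewrite /dd; move: eps_ge0 eps_lt1; nra.
Qed.

Lemma eps_small_addr_le u v :
  `|f u| <= eps * `|u| -> 0 <= h u -> `|f v| <= eps * `|v| -> 0 <= h v ->
  f (u + v) <= eps * `|u + v|.
Proof.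
move=> fu_le hu_ge0 fv_le hv_ge0.
have [hu0|hu_neq0] := eqVneq (h u) 0.
  by rewrite (eps_small_ker0 fu_le hu0) add0r; move: fv_le; rewrite ler_norml => /andP[].
have [hv0|hv_neq0] := eqVneq (h v) 0.
  by rewrite (eps_small_ker0 fv_le hv0) addr0; move: fu_le; rewrite ler_norml => /andP[].
have hu_gt0 : 0 < h u by rewrite lt_def hu_neq0.
have hv_gt0 : 0 < h v by rewrite lt_def hv_neq0.
(* the slope f/h of u + v is the mediant of the slopes of u and v *)
have [slope|slope] := leP (f (u + v) * h u) (f u * h (u + v)).
  exact: eps_small_addr_slope.
rewrite addrC; apply: eps_small_addr_slope => //.
move: slope; rewrite !(lin_functionalD lf) !(lin_functionalD lh); nra.
Qed.

End EpsCone.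

Lemma eps_cone0 (R : realType) (V : normedModType R) (f h : V -> R) eps :
  lin_functional f -> lin_functional h -> eps_cone f h eps 0.
Proof.
move=> lf lh.
by rewrite /eps_cone /= (lin_functional0 lf) (lin_functional0 lh) !normr0 mulr0.
Qed.

Lemma eps_cone_normal (R : realType) (V : normedModType R) (f h : V -> R) (x z : V)
    eps :
  lin_functional f -> lin_functional h -> (forall v, v = f v *: x + h v *: z) ->
  `|x| = 1 -> 0 <= eps -> eps < 1 -> normal_cone (eps_cone f h eps).
Proof.
move=> lf lh decomp nx eps_ge0 eps_lt1; split.
- move=> u v [fu_le hu_ge0] [fv_le hv_ge0].
  split; last by rewrite (lin_functionalD lh) addr_ge0.
  have := eps_small_addr_le lf lh decomp nx eps_ge0 eps_lt1 fu_le hu_ge0 fv_le hv_ge0.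
  have decompN w : w = (- f w) *: (- x) + h w *: z.
    by rewrite scalerN scaleNr opprK -decomp.
  have nxN : `|- x| = 1 by rewrite normrN.
  have nfu : `|- f u| <= eps * `|u| by rewrite normrN.
  have nfv : `|- f v| <= eps * `|v| by rewrite normrN.
  have := eps_small_addr_le (lin_functional_opp lf) lh decompN nxN eps_ge0 eps_lt1
    nfu hu_ge0 nfv hv_ge0.
  by rewrite ler_norml /=; lra.
- move=> a v a_ge0 [fv_le hv_ge0]; split; last by rewrite (lin_functionalZ lh) mulr_ge0.
  by rewrite (lin_functionalZ lf) normrM normrZ ger0_norm // mulrCA ler_wpM2l.
- apply/seteqP; split=> [y [[fy_le hy_ge0] [v [_ hv_ge0] vy]]|_ ->].
    apply: (eps_small_ker0 decomp nx eps_lt1 fy_le).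
    by move: hy_ge0; rewrite -vy (lin_functionalN lh); lra.
  have K0 := eps_cone0 eps lf lh.
  by split=> //; exists 0; rewrite ?oppr0.
Qed.

Lemma eps_small_split (R : realType) (V : normedModType R) (f h : V -> R) eps :
  lin_functional f -> lin_functional h ->
  [set u | `|f u| <= eps * `|u|] =
  eps_cone f h eps `|` [set - v | v in eps_cone f h eps].
Proof.
move=> lf lh; apply/seteqP; split=> [y /= fy_le|y [[]//|[v [fv_le _] <-]]].
  have [hy_ge0|hy_lt0] := leP 0 (h y); first by left.
  right; exists (- y); last by rewrite opprK.
  by rewrite /eps_cone /= (lin_functionalN lf) (lin_functionalN lh) !normrN; split; lra.
by rewrite /= (lin_functionalN lf) !normrN.
Qed.

Theorem theorem2p7 (R : realType) (X : completeNormedModType R)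
  (hdim : dim2 X) (x : X) (hx : smooth_point x)
  (eps : R) (heps0 : 0 <= eps) (heps1 : eps < 1) :
  exists K : set X, normal_cone K /\
    G x eps = K `|` [set - v | v in K].
Proof.
have [nx [f [lf [f_le _] fx f_unique]]] := hx.
have [z [fz z0]] := dim2_ker_neq0 hdim lf fx.
have [h [lh _ _ decomp]] := coord_functional hdim lf fx fz z0.
exists (eps_cone f h eps); split; first exact: eps_cone_normal decomp nx heps0 heps1.
by rewrite (G_smooth lf f_le fx nx hdim f_unique heps0); exact: eps_small_split.
Qed.
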